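(* Let $n>1$, let $D$ be a set, and let $f:\mathcal{S}^n\to D$ be (rightward) memoryless, witnessed by a rightward or leftward function $g:\mathcal{S}^{n-1}\to D$ and a binary operator $\oplus:D\times D\to D$ (so $f(\sigma\bullet[\delta])=f(\sigma)\oplus g(\delta)$ for all $\sigma,\delta$). Define $h:\mathcal{S}_D\to D$ by $h([])=f([])$ and $h(x\bullet[a])=h(x)\oplus a$ for all $x\in\mathcal{S}_D$, $a\in D$ (the summarized version of $f$). If $h$ is $\odot$-homomorphic for some binary operator $\odot:D\times D\to D$, then $f$ is $\odot$-homomorphic.
   Context: $\mathit{Sc}$ is a set of scalars. $\mathcal{S}^0=\mathit{Sc}$ and, for $n\ge1$, $\mathcal{S}^n$ is the set of finite sequences of elements of $\mathcal{S}^{n-1}$; $\mathcal{S}_D$ is the set of finite sequences of elements of $D$; $\bullet$ is concatenation, $[]$ the empty sequence, $[a]$ a one-element sequence. A function $g$ on sequences is rightward if there is $\oplus'$ with $g(x\bullet[a])=g(x)\oplus' a$ for all $x,a$, leftward if there is $\otimes'$ with $g([a]\bullet x)=a\otimes' g(x)$. A function $F$ on sequences is $\odot$-homomorphic if $F(x\bullet y)=F(x)\odot F(y)$ for all sequences $x,y$ in its domain. *)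

From mathcomp Require Import all_boot.
Set Implicit Arguments. Unset Strict Implicit. Unset Printing Implicit Defensive.

Fixpoint S (Sc : Type) (n : nat) : Type :=
  match n with
  | 0 => Sc
  | n'.+1 => seq (S Sc n')
  end.

Definition rightward (A B : Type) (g : seq A -> B) : Prop :=
  exists op' : B -> A -> B, forall (x : seq A) (a : A), g (x ++ [:: a]) = op' (g x) a.

Definition leftward (A B : Type) (g : seq A -> B) : Prop :=
  exists op' : A -> B -> B, forall (x : seq A) (a : A), g ([:: a] ++ x) = op' a (g x).

Definition homomorphic (A B : Type) (odot : B -> B -> B) (F : seq A -> B) : Prop :=
  forall x y : seq A, F (x ++ y) = odot (F x) (F y).

From mathcomp Require Import all_boot.

(* A memoryless [f] is its summary [h] applied to the sequence of [g]-values,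
   and [map g] preserves concatenation, so [f] inherits every homomorphism
   property of [h]. *)

Section MemorylessSummary.

Variables (A D : Type) (f : seq A -> D) (g : A -> D) (oplus : D -> D -> D).
Variable h : seq D -> D.

Hypothesis f_snoc : forall (s : seq A) (a : A), f (s ++ [:: a]) = oplus (f s) (g a).
Hypothesis h_nil : h [::] = f [::].
Hypothesis h_snoc : forall (x : seq D) (d : D), h (x ++ [:: d]) = oplus (h x) d.

Lemma memoryless_summaryE (s : seq A) : f s = h (map g s).
Proof.
elim/last_ind: s => [|s a IHs]; first by rewrite h_nil.
by rewrite -cats1 f_snoc map_cat h_snoc IHs.
Qed.

End MemorylessSummary.

Lemma homomorphic_comp_map (A B D : Type) (odot : D -> D -> D)
    (F : seq A -> D) (g : A -> B) (H : seq B -> D) :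
  F =1 H \o map g -> homomorphic odot H -> homomorphic odot F.
Proof. by move=> FE Hhom x y; rewrite !FE /= map_cat Hhom. Qed.

(* n > 1 is written n = m.+2, so S^n = S Sc m.+2 and S^(n-1) = S Sc m.+1 *)
Theorem proposition4p6 (Sc D : Type) (m : nat)
  (f : S Sc m.+2 -> D) (g : S Sc m.+1 -> D) (oplus : D -> D -> D)
  (hg : rightward g \/ leftward g)
  (hmem : forall (sigma : S Sc m.+2) (delta : S Sc m.+1),
            f (sigma ++ [:: delta]) = oplus (f sigma) (g delta))
  (h : seq D -> D)
  (h_nil : h [::] = f [::])
  (h_snoc : forall (x : seq D) (a : D), h (x ++ [:: a]) = oplus (h x) a)
  (odot : D -> D -> D)
  (hhom : homomorphic odot h) :
  homomorphic odot f.
Proof.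
apply: (@homomorphic_comp_map _ _ _ odot f g h _ hhom).
exact: memoryless_summaryE hmem h_nil h_snoc.
Qed.
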